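(* (Bandit setting.) Let $A$ arms have reward distributions supported in $[0,1]$ with mean reward vector $r\in[0,1]^A$, and let $\Delta:=\min_{a\ne a'}|r(a)-r(a')|$. For $\theta\in\mathbb{R}^A$ let $f(\theta)=\langle\pi_\theta,r\rangle$, sample $a\sim\pi_\theta$, observe $R\sim P_a$, form $\hat r(a')=\frac{\mathbb{I}\{a=a'\}}{\pi_\theta(a')}R$ and $\hat g(\theta)(a')=\pi_\theta(a')[\hat r(a')-\langle\pi_\theta,\hat r\rangle]$. Then for all $\theta$, $\mathbb{E}\|\hat g(\theta)\|_2^2\le\varrho\,\|\nabla f(\theta)\|_2$ with $\varrho:=\frac{8A^{3/2}}{\Delta^2}$. (Tabular MDP setting.) For a finite discounted MDP with $S$ states, $A$ actions, rewards in $[0,1]$, discount $\gamma\in[0,1)$, initial distribution $\rho$, and softmax tabular policy $\pi_\theta$, let $f(\theta)=V^{\pi_\theta}(\rho)$. Sample independently $a(s)\sim\pi_\theta(\cdot\mid s)$ for every state $s$, set $\hat Q^{\pi_\theta}(s,a)=\frac{\mathbb{I}\{a(s)=a\}}{\pi_\theta(a\mid s)}Q^{\pi_\theta}(s,a)$ and $\hat g(\theta)(s,a)=\frac{1}{1-\gamma}d^{\pi_\theta}_\rho(s)\,\pi_\theta(a\mid s)\big(\hat Q^{\pi_\theta}(s,a)-\langle\pi_\theta(\cdot\mid s),\hat Q^{\pi_\theta}(s,\cdot)\rangle\big)$. Then for all $\theta$, $\mathbb{E}\|\hat g(\theta)\|_2^2\le\varrho\,\|\nabla f(\theta)\|_2$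 with $\varrho:=\frac{4A^{3/2}S^{1/2}}{(1-\gamma)^4\Delta^2}$, where $\Delta:=\min_s\min_{a\ne a'}|Q^{\pi_\theta}(s,a)-Q^{\pi_\theta}(s,a')|$.
   Context: Softmax policy: $\pi_\theta(a)=\exp(\theta(a))/\sum_{a'}\exp(\theta(a'))$ (bandit) and $\pi_\theta(a\mid s)=\exp(\theta(s,a))/\sum_{a'}\exp(\theta(s,a'))$ (MDP). In the MDP, $Q^\pi(s,a)=\mathbb{E}[\sum_{t\ge0}\gamma^t r(s_t,a_t)\mid s_0=s,a_0=a]$ under $\pi$, $V^\pi(s)=\mathbb{E}_{a\sim\pi(\cdot|s)}Q^\pi(s,a)$, $V^\pi(\rho)=\mathbb{E}_{s\sim\rho}V^\pi(s)$, $A^\pi=Q^\pi-V^\pi$, and $d^\pi_\rho(s)=(1-\gamma)\mathbb{E}_{s_0\sim\rho}\sum_{t\ge0}\gamma^t\Pr^\pi[s_t=s\mid s_0]$. The exact gradients are $\nabla f(\theta)(a)=\pi_\theta(a)[r(a)-\langle\pi_\theta,r\rangle]$ (bandit) and $\nabla f(\theta)(s,a)=\frac{1}{1-\gamma}d^{\pi_\theta}_\rho(s)\pi_\theta(a\mid s)A^{\pi_\theta}(s,a)$ (MDP). Expectations are over the sampled actions (and rewards). *)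

From HB Require Import structures.
From mathcomp Require Import all_boot all_order all_algebra.
From mathcomp Require Import all_classical all_reals all_analysis.

Set Implicit Arguments.
Unset Strict Implicit.
Unset Printing Implicit Defensive.

Import Order.TTheory GRing.Theory Num.Theory.
Local Open Scope ring_scope.

Section Defs.
Variable R : realType.

Definition softmax (T : finType) (th : T -> R) (a : T) : R :=
  expR (th a) / \sum_(b : T) expR (th b).

Definition inner (T : finType) (u v : T -> R) : R := \sum_(a : T) u a * v a.

Definition sqnorm2 (T : finType) (v : T -> R) : R := \sum_(a : T) v a ^+ 2.
Definition norm2 (T : finType) (v : T -> R) : R := Num.sqrt (sqnorm2 v).

(* minimum of F over {x | P x}; the value 1 is an (irrelevant) default
   used only when this index set is empty *)
Definition fmin (T : finType) (P : pred T) (F : T -> R) : R :=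
  match [pick x | P x] with
  | Some x0 => \big[Num.min/F x0]_(x | P x) F x
  | None => 1
  end.

Section Bandit.
Variable Arm : finType.

Definition bandit_mean (P : Arm -> probability R R) (a : Arm) : R :=
  fine (\int[P a]_x (x%:E))%E.

Definition bandit_Delta (r : Arm -> R) : R :=
  fmin (fun p : Arm * Arm => p.1 != p.2) (fun p => `|r p.1 - r p.2|).

(* exact gradient of f(theta) = <pi_theta, r> *)
Definition bandit_grad (r : Arm -> R) (th : Arm -> R) (a : Arm) : R :=
  softmax th a * (r a - inner (softmax th) r).

(* importance-sampling reward estimate, given sampled arm a and reward x *)
Definition bandit_rhat (th : Arm -> R) (a : Arm) (x : R) (a' : Arm) : R :=
  (a == a')%:R / softmax th a' * x.

Definition bandit_ghat (th : Arm -> R) (a : Arm) (x : R) (a' : Arm) : R :=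
  softmax th a' *
    (bandit_rhat th a x a' - inner (softmax th) (bandit_rhat th a x)).

Definition bandit_Esq (P : Arm -> probability R R) (th : Arm -> R) : \bar R :=
  (\sum_(a : Arm) (softmax th a)%:E *
     \int[P a]_x (sqnorm2 (bandit_ghat th a x))%:E)%E.

End Bandit.

Section MDP.
Variables (S Act : finType).
(* P s a s' = transition probability P(s' | s, a); r s a = reward *)
Variables (P : S -> Act -> S -> R) (r : S -> Act -> R) (gamma : R).

Definition pol (th : S -> Act -> R) (s : S) (a : Act) : R := softmax (th s) a.

(* E^pi[ r(s_t, a_t) | s_0 = s, a_0 = a ] *)
Fixpoint exp_rew (pi : S -> Act -> R) (t : nat) (s : S) (a : Act) : R :=
  match t with
  | 0 => r s a
  | t'.+1 => \sum_(s' : S) P s a s' * \sum_(a' : Act) pi s' a' * exp_rew pi t' s' a'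
  end.

(* Pr^pi[ s_t = s | s_0 ] *)
Fixpoint state_prob (pi : S -> Act -> R) (t : nat) (s0 s : S) : R :=
  match t with
  | 0 => (s0 == s)%:R
  | t'.+1 => \sum_(s1 : S) state_prob pi t' s0 s1 *
               \sum_(a : Act) pi s1 a * P s1 a s
  end.

Definition Qfun (pi : S -> Act -> R) (s : S) (a : Act) : R :=
  limn (fun n => \sum_(t < n) gamma ^+ t * exp_rew pi t s a).

Definition Vfun (pi : S -> Act -> R) (s : S) : R :=
  \sum_(a : Act) pi s a * Qfun pi s a.

Definition Afun (pi : S -> Act -> R) (s : S) (a : Act) : R :=
  Qfun pi s a - Vfun pi s.

Definition dvisit (pi : S -> Act -> R) (rho : S -> R) (s : S) : R :=
  (1 - gamma) * \sum_(s0 : S) rho s0 *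
    limn (fun n => \sum_(t < n) gamma ^+ t * state_prob pi t s0 s).

(* exact gradient of f(theta) = V^{pi_theta}(rho) *)
Definition mdp_grad (rho : S -> R) (th : S -> Act -> R) (p : S * Act) : R :=
  (1 - gamma)^-1 * dvisit (pol th) rho p.1 * pol th p.1 p.2
    * Afun (pol th) p.1 p.2.

(* Qhat(s,a) given the sampled actions sigma(s) ~ pi(.|s) *)
Definition mdp_Qhat (th : S -> Act -> R) (sigma : {ffun S -> Act})
    (s : S) (a : Act) : R :=
  (sigma s == a)%:R / pol th s a * Qfun (pol th) s a.

Definition mdp_ghat (rho : S -> R) (th : S -> Act -> R) (sigma : {ffun S -> Act})
    (p : S * Act) : R :=
  (1 - gamma)^-1 * dvisit (pol th) rho p.1 * pol th p.1 p.2 *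
    (mdp_Qhat th sigma p.1 p.2 - inner (pol th p.1) (mdp_Qhat th sigma p.1)).

(* E || ghat(theta) ||_2^2, with a(s) ~ pi_theta(.|s) independently over s *)
Definition mdp_Esq (rho : S -> R) (th : S -> Act -> R) : R :=
  \sum_(sigma : {ffun S -> Act})
     (\prod_(s : S) pol th s (sigma s)) * sqnorm2 (mdp_ghat rho th sigma).

Definition mdp_Delta (th : S -> Act -> R) : R :=
  fmin (fun p : S * Act * Act => p.1.2 != p.2)
       (fun p => `|Qfun (pol th) p.1.1 p.1.2 - Qfun (pol th) p.1.1 p.2|).

End MDP.
End Defs.

From HB Require Import structures.
From mathcomp Require Import all_boot all_order all_algebra.
From mathcomp Require Import all_classical all_reals all_analysis.
From mathcomp Require Import measurable_realfun ring lra.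

Set Implicit Arguments.
Unset Strict Implicit.
Unset Printing Implicit Defensive.

Import Order.TTheory GRing.Theory Num.Theory.
Local Open Scope ring_scope.

(* Both estimators have the form X (e_b - pi) with b ~ pi and a bounded scalar X
   (X = R for the bandit, X = d(s) Q(s, b) / (1 - gamma) in state s of the MDP),
   so E ||g||^2 is controlled by E_b ||e_b - pi||^2 = 1 - ||pi||^2 <= 2 (1 - pi(b0)),
   where b0 is the action whose value is closest to the mean <pi, Q>.  Every other
   action is Delta-far from Q(b0), hence Delta/2-far from the mean, so that
   sum_a pi(a) |Q(a) - <pi, Q>| >= (Delta / 2) (1 - pi(b0)).  The left-hand side
   is the l1 norm of the exact gradient, which Cauchy-Schwarz bounds by its l2 norm
   times the square root of the number of coordinates; the remaining slack in the
   constants is absorbed by Delta <= 1 / (1 - gamma) and #|A| >= 1. *)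

Lemma sum_indicator_mul (R : pzSemiRingType) (T : finType) (b : T) (F : T -> R) :
  \sum_a (b == a)%:R * F a = F b.
Proof.
rewrite (bigD1 b) //= eqxx mul1r big1 ?addr0 // => a /negbTE.
by rewrite eq_sym => ->; rewrite mul0r.
Qed.

Lemma sum_ffun_prod_coord (R : comPzSemiRingType) (I J : finType)
    (p : I -> J -> R) (i0 : I) (G : J -> R) :
  (forall i, \sum_j p i j = 1) ->
  \sum_(f : {ffun I -> J}) (\prod_i p i (f i)) * G (f i0) = \sum_j p i0 j * G j.
Proof.
move=> p_sum1.
pose F i j := if i == i0 then p i j * G j else p i j.
have prodF (f : {ffun I -> J}) : (\prod_i p i (f i)) * G (f i0) = \prod_i F i (f i).
  rewrite (bigD1 i0) //= [RHS](bigD1 i0) //= /F eqxx mulrAC; congr (_ * _).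
  by apply: eq_bigr => i /negbTE ->.
rewrite (eq_bigr _ (fun f _ => prodF f)) -bigA_distr_bigA /= (bigD1 i0) //=.
by rewrite [X in _ * X]big1 ?mulr1 /F ?eqxx // => i /negbTE ->; exact: p_sum1.
Qed.

Section Norms.
Variables (R : realType) (T : finType).
Implicit Types v : T -> R.

Lemma sqnorm2_ge0 v : 0 <= sqnorm2 v.
Proof. by apply: sumr_ge0 => a _; exact: sqr_ge0. Qed.

Lemma norm2_ge0 v : 0 <= norm2 v.
Proof. exact: sqrtr_ge0. Qed.

Lemma sqr_sum_le_card_sqnorm2 v : (\sum_a v a) ^+ 2 <= #|T|%:R * sqnorm2 v.
Proof.
have sum_sqrB : \sum_i \sum_j (v i - v j) ^+ 2 =
    2 * (#|T|%:R * sqnorm2 v) - 2 * (\sum_a v a) ^+ 2.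
  transitivity (\sum_i (#|T|%:R * v i ^+ 2 + sqnorm2 v - 2 * (v i * \sum_j v j))).
    apply: eq_bigr => i _.
    rewrite (eq_bigr (fun j => v i ^+ 2 + v j ^+ 2 - 2 * (v i * v j))); last first.
      by move=> j _; ring.
    by rewrite sumrB big_split sumr_const -[_ *+ _]mulr_natl -!mulr_sumr.
  rewrite sumrB big_split /= sumr_const -[_ *+ _]mulr_natl -!mulr_sumr -mulr_suml.
  by rewrite /sqnorm2 expr2; ring.
have : 0 <= \sum_i \sum_j (v i - v j) ^+ 2.
  by apply: sumr_ge0 => i _; apply: sumr_ge0 => j _; exact: sqr_ge0.
lra.
Qed.

Lemma sum_abs_le_sqrt_card_norm2 v : \sum_a `|v a| <= Num.sqrt #|T|%:R * norm2 v.
Proof.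
have sum_ge0 : 0 <= \sum_a `|v a| by exact: sumr_ge0.
rewrite /norm2 -sqrtrM ?ler0n // -(ger0_norm sum_ge0) -sqrtr_sqr.
rewrite ler_sqrt ?mulr_ge0 ?ler0n ?sqnorm2_ge0 //.
have -> : sqnorm2 v = sqnorm2 (fun a => `|v a|).
  by apply: eq_bigr => a _; rewrite real_normK ?num_real.
exact: sqr_sum_le_card_sqnorm2.
Qed.

End Norms.

Section Softmax.
Variables (R : realType) (T : finType).

Lemma softmax_gt0 (th : T -> R) a : 0 < softmax th a.
Proof.
rewrite /softmax divr_gt0 ?expR_gt0 // (bigD1 a) //=.
by rewrite ltr_wpDr ?expR_gt0 ?sumr_ge0 // => b _; exact: expR_ge0.
Qed.

Lemma softmax_sum1 (th : T -> R) : (0 < #|T|)%N -> \sum_a softmax th a = 1.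
Proof.
case/card_gt0P => a0 _; rewrite /softmax -mulr_suml divff // gt_eqF // (bigD1 a0) //=.
by rewrite ltr_wpDr ?expR_gt0 ?sumr_ge0 // => b _; exact: expR_ge0.
Qed.

End Softmax.

Section FiniteMinimum.
Variables (R : realType) (T : finType).

Lemma fmin_le (P : pred T) (F : T -> R) y : P y -> fmin P F <= F y.
Proof.
move=> Py; rewrite /fmin; case: pickP => [x0 _|/(_ y)]; last by rewrite Py.
exact: ge_bigmin_seq _ _ _ _ (mem_index_enum _) Py.
Qed.

(* [1 <= M] covers the default value of [fmin] on an empty index set. *)
Lemma fmin_le_ub (P : pred T) (F : T -> R) M :
  (forall y, P y -> F y <= M) -> 1 <= M -> fmin P F <= M.
Proof.
move=> F_le M_ge1; rewrite /fmin; case: pickP => [x0 Px0|_] //.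
exact: le_trans (ge_bigmin_seq _ _ _ _ (mem_index_enum _) Px0) (F_le _ Px0).
Qed.

End FiniteMinimum.

Section FiniteDistribution.
Variables (R : realType) (T : finType).
Implicit Types (p Q : T -> R).

Definition mean_abs_dev p Q : R := \sum_a p a * `|Q a - inner p Q|.

Lemma sqnorm2_indicatorB p b :
  sqnorm2 (fun a => (b == a)%:R - p a) = 1 - 2 * p b + sqnorm2 p.
Proof.
rewrite /sqnorm2.
transitivity (\sum_a ((b == a)%:R * 1 - (b == a)%:R * (2 * p a) + p a ^+ 2)).
  by apply: eq_bigr => a _; case: (b == a); rewrite ?mulr1n ?mulr0n; ring.
by rewrite big_split sumrB /= !sum_indicator_mul.
Qed.

Lemma one_sub_sqnorm2_le p a0 : 1 - sqnorm2 p <= 2 * (1 - p a0).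
Proof.
have : p a0 ^+ 2 <= sqnorm2 p.
  by rewrite /sqnorm2 (bigD1 a0) //= lerDl sumr_ge0 // => a _; exact: sqr_ge0.
have := sqr_ge0 (p a0 - 1); nra.
Qed.

Variable p : T -> R.
Hypotheses (p_ge0 : forall a, 0 <= p a) (p_sum1 : \sum_a p a = 1).

Lemma card_gt0_of_sum1 : (0 < #|T|)%N.
Proof.
apply/card_gt0P; case: (pickP T) => [a _|T0]; first by exists a.
by move: p_sum1; rewrite big_pred0 // => /eqP; rewrite eq_sym oner_eq0.
Qed.

Lemma expected_sqnorm2_indicatorB :
  \sum_b p b * sqnorm2 (fun a => (b == a)%:R - p a) = 1 - sqnorm2 p.
Proof.
under eq_bigr do rewrite sqnorm2_indicatorB.
rewrite (eq_bigr (fun b => p b - 2 * p b ^+ 2 + sqnorm2 p * p b)); last first.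
  by move=> b _; ring.
by rewrite big_split sumrB /= -!mulr_sumr p_sum1 /sqnorm2; ring.
Qed.

Variables (Q : T -> R) (D : R).
Hypothesis Q_sep : forall a b, a != b -> D <= `|Q a - Q b|.

Lemma mean_abs_dev_ge a0 :
  (forall a, `|Q a0 - inner p Q| <= `|Q a - inner p Q|) ->
  D / 2 * (1 - p a0) <= mean_abs_dev p Q.
Proof.
move=> a0_closest; set V := inner p Q.
have <- : \sum_(a | a != a0) p a = 1 - p a0.
  by rewrite -p_sum1 [in RHS](bigD1 a0) //= addrAC subrr add0r.
rewrite mulr_sumr /mean_abs_dev [leRHS](bigD1 a0) //= -[leLHS]add0r.
apply: lerD; first by rewrite mulr_ge0.
apply: ler_sum => a a_neq; rewrite mulrC ler_wpM2l //.
have := Q_sep a_neq; have := a0_closest a.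
have : `|Q a - Q a0| <= `|Q a - V| + `|Q a0 - V|.
  by rewrite (distrC (Q a0)); exact: ler_distD.
lra.
Qed.

Hypothesis D_gt0 : 0 < D.

Lemma one_sub_sqnorm2_le_mean_abs_dev : 1 - sqnorm2 p <= 4 / D * mean_abs_dev p Q.
Proof.
have /card_gt0P[x _] := card_gt0_of_sum1.
have [a0 _ a0_closest] := arg_minP (fun a => `|Q a - inner p Q|) (isT : xpredT x).
apply: le_trans (one_sub_sqnorm2_le p a0) _.
have -> : 2 * (1 - p a0) = 4 / D * (D / 2 * (1 - p a0)) by field; rewrite gt_eqF.
apply: ler_wpM2l; first by rewrite divr_ge0 ?ltW.
exact: mean_abs_dev_ge (fun a => a0_closest a isT).
Qed.

Lemma expected_weighted_sqnorm2_indicatorB_le (w : T -> R) W :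
  (forall b, 0 <= w b <= W) ->
  \sum_b p b * (w b * sqnorm2 (fun a => (b == a)%:R - p a)) <=
    W * (4 / D) * mean_abs_dev p Q.
Proof.
move=> w_bound; have /card_gt0P[b0 _] := card_gt0_of_sum1.
have W_ge0 : 0 <= W by have /andP[] := w_bound b0; exact: le_trans.
apply: (@le_trans _ _ (W * \sum_b p b * sqnorm2 (fun a => (b == a)%:R - p a))).
  rewrite mulr_sumr; apply: ler_sum => b _; have /andP[_ w_le] := w_bound b.
  by rewrite mulrCA; apply: ler_wpM2r; rewrite ?mulr_ge0 ?sqnorm2_ge0.
rewrite -mulrA; apply: ler_wpM2l => //.
by rewrite expected_sqnorm2_indicatorB one_sub_sqnorm2_le_mean_abs_dev.
Qed.

End FiniteDistribution.

Section UnitIntervalSupport.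
Local Open Scope classical_set_scope.
Variables (R : realType) (P : probability R R).
Hypothesis P_unit : P [set x : R | 0 <= x <= 1] = 1%E.

Lemma ae_unit_interval : {ae P, forall x, 0 <= x <= 1}.
Proof.
have unit_itv : [set x : R | 0 <= x <= 1] = `[0, 1].
  by apply/seteqP; split => x /=; rewrite in_itv.
exists (~` [set x : R | 0 <= x <= 1]); split => //.
- by rewrite unit_itv; apply: measurableC; exact: measurable_itv.
- by rewrite probability_setC ?P_unit ?subee // unit_itv; exact: measurable_itv.
Qed.

Lemma integral_sqr_mul_le (h : R) : 0 <= h -> (\int[P]_x (x ^+ 2 * h)%:E <= h%:E)%E.
Proof.
move=> h_ge0.
have -> : h%:E = (\int[P]_x (cst h%:E) x)%E.
  by rewrite integral_cst //; change (h%:E = h%:E * P setT)%E; rewrite probability_setT mule1.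
apply: ae_ge0_le_integral => //.
- by move=> x _; rewrite lee_fin mulr_ge0 ?sqr_ge0.
- by apply/measurable_EFinP; apply: measurable_funM.
- apply: filterS ae_unit_interval => x /andP[x0 x1] _.
  by rewrite lee_fin ler_piMl // expr_le1.
Qed.

Lemma mean_unit_interval : 0 <= fine (\int[P]_x x%:E)%E <= 1.
Proof.
pose clamp x : R := Num.max 0 (Num.min x 1).
have clamp_measurable : measurable_fun setT (fun x => (clamp x)%:E).
  by apply/measurable_EFinP; apply: measurable_maxr => //; exact: measurable_minr.
have -> : (\int[P]_x x%:E = \int[P]_x (clamp x)%:E)%E.
  apply: ae_eq_integral => //.
  apply: filterS ae_unit_interval => x /andP[x0 x1] _.
  by rewrite /clamp (min_l x1) (max_r x0).
have int_ge0 : (0 <= \int[P]_x (clamp x)%:E)%E.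
  by apply: integral_ge0 => x _; rewrite lee_fin le_max lexx.
have int_le1 : (\int[P]_x (clamp x)%:E <= 1)%E.
  have -> : 1%E = (\int[P]_x (cst 1%:E) x)%E.
    by rewrite integral_cst //; change (1 = 1 * P setT)%E; rewrite probability_setT mule1.
  by apply: ge0_le_integral => // x _; rewrite lee_fin ?le_max ?lexx // ge_max ler01 ge_min lexx orbT.
by move: int_ge0 int_le1; case: (\int[P]_x _)%E => [r| |] //=; rewrite !lee_fin => -> ->.
Qed.

End UnitIntervalSupport.

Section DiscountedSums.
Variables (R : realType) (g : R).
Hypothesis g_unit : 0 <= g < 1.
Variable u : nat -> R.
Hypothesis u_unit : forall t, 0 <= u t <= 1.

Lemma discounted_sum_ge0 n : 0 <= \sum_(t < n) g ^+ t * u t.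
Proof.
have /andP[g0 _] := g_unit.
by apply: sumr_ge0 => t _; have /andP[u0 _] := u_unit t; rewrite mulr_ge0 ?exprn_ge0.
Qed.

Lemma discounted_sum_le n : \sum_(t < n) g ^+ t * u t <= (1 - g)^-1.
Proof.
have /andP[g0 g1] := g_unit.
have geometric : \sum_(t < n) g ^+ t * (1 - g) = 1 - g ^+ n.
  by rewrite -mulr_suml mulrC -[1 - g]opprB mulNr -subrX1 opprB.
apply: (@le_trans _ _ (\sum_(t < n) g ^+ t)).
  by apply: ler_sum => t _; have /andP[u0 u1] := u_unit t; rewrite ler_piMr ?exprn_ge0.
rewrite -[(1 - g)^-1]div1r ler_pdivlMr ?subr_gt0 // mulr_suml geometric.
by rewrite gerBl exprn_ge0.
Qed.

Lemma limn_discounted_sum_bound :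
  0 <= limn (fun n => \sum_(t < n) g ^+ t * u t) <= (1 - g)^-1.
Proof.
have /andP[g0 _] := g_unit.
have cvg_sum : cvgn (fun n => \sum_(t < n) g ^+ t * u t).
  apply: nondecreasing_is_cvgn.
    apply/nondecreasing_seqP => n; rewrite big_ord_recr /= lerDl.
    by have /andP[u0 _] := u_unit n; rewrite mulr_ge0 ?exprn_ge0.
  by exists (1 - g)^-1 => _ [n _ <-]; exact: discounted_sum_le.
apply/andP; split; first by apply: limr_ge => //; exact: nearW discounted_sum_ge0.
by apply: limr_le => //; exact: nearW discounted_sum_le.
Qed.

End DiscountedSums.

Section PolicyEvaluation.
Variables (R : realType) (S Act : finType).
Variables (P : S -> Act -> S -> R) (r : S -> Act -> R) (gamma : R) (pi : S -> Act -> R).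
Hypotheses (P_ge0 : forall s a s', 0 <= P s a s') (P_sum1 : forall s a, \sum_s' P s a s' = 1).
Hypotheses (pi_ge0 : forall s a, 0 <= pi s a) (pi_sum1 : forall s, \sum_a pi s a = 1).

Lemma exp_rew_unit : (forall s a, 0 <= r s a <= 1) ->
  forall t s a, 0 <= exp_rew P r pi t s a <= 1.
Proof.
move=> r_unit; elim=> [|t IH] s a /=; first exact: r_unit.
apply/andP; split.
  apply: sumr_ge0 => s' _; rewrite mulr_ge0 // sumr_ge0 // => a' _.
  by have /andP[? _] := IH s' a'; rewrite mulr_ge0.
rewrite -(P_sum1 s a); apply: ler_sum => s' _; apply: ler_piMr => //.
rewrite -(pi_sum1 s'); apply: ler_sum => a' _.
by have /andP[? ?] := IH s' a'; rewrite ler_piMr.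
Qed.

Lemma state_prob_ge0 t s0 s : 0 <= state_prob P pi t s0 s.
Proof.
elim: t s => [|t IH] s /=; first by rewrite ler0n.
by apply: sumr_ge0 => s1 _; rewrite mulr_ge0 // sumr_ge0 // => a _; rewrite mulr_ge0.
Qed.

Lemma state_prob_sum1 t s0 : \sum_s state_prob P pi t s0 s = 1.
Proof.
elim: t => [|t IH] /=.
  by rewrite (eq_bigr (fun s => (s0 == s)%:R * 1)) ?sum_indicator_mul // => s _; rewrite mulr1.
rewrite exchange_big /= -[RHS]IH; apply: eq_bigr => s1 _.
rewrite -mulr_sumr exchange_big /= -[RHS]mulr1 -(pi_sum1 s1); congr (_ * _).
by apply: eq_bigr => a _; rewrite -mulr_sumr P_sum1 mulr1.
Qed.

Lemma state_prob_unit t s0 s : 0 <= state_prob P pi t s0 s <= 1.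
Proof.
rewrite state_prob_ge0 -(state_prob_sum1 t s0) (bigD1 s) //= lerDl.
by apply: sumr_ge0 => s' _; exact: state_prob_ge0.
Qed.

Hypothesis gamma_unit : 0 <= gamma < 1.

Lemma Qfun_bound : (forall s a, 0 <= r s a <= 1) ->
  forall s a, 0 <= Qfun P r gamma pi s a <= (1 - gamma)^-1.
Proof.
move=> r_unit s a.
exact: (limn_discounted_sum_bound gamma_unit (fun t => exp_rew_unit r_unit t s a)).
Qed.

Lemma dvisit_unit (rho : S -> R) : (forall s, 0 <= rho s) -> \sum_s rho s = 1 ->
  forall s, 0 <= dvisit P gamma pi rho s <= 1.
Proof.
move=> rho_ge0 rho_sum1 s; have /andP[g0 g1] := gamma_unit.
set L := fun s0 => limn (fun n => \sum_(t < n) gamma ^+ t * state_prob P pi t s0 s).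
have L_bound s0 : 0 <= L s0 <= (1 - gamma)^-1.
  exact: (limn_discounted_sum_bound gamma_unit (fun t => state_prob_unit t s0 s)).
have sum_le : \sum_s0 rho s0 * L s0 <= (1 - gamma)^-1.
  apply: (@le_trans _ _ (\sum_s0 rho s0 * (1 - gamma)^-1)).
    by apply: ler_sum => s0 _; have /andP[_ ?] := L_bound s0; exact: ler_wpM2l.
  by rewrite -mulr_suml rho_sum1 mul1r.
have sum_ge0 : 0 <= \sum_s0 rho s0 * L s0.
  by apply: sumr_ge0 => s0 _; have /andP[? _] := L_bound s0; rewrite mulr_ge0.
apply/andP; split; first by apply: mulr_ge0 => //; rewrite subr_ge0 ltW.
apply: le_trans (ler_wpM2l _ sum_le) _; first by rewrite subr_ge0 ltW.
by rewrite mulfV ?gt_eqF ?subr_gt0.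
Qed.

End PolicyEvaluation.

Section BanditGradient.
Variables (R : realType) (Arm : finType) (th : Arm -> R).
Local Notation pi := (softmax th).

Lemma bandit_ghatE a x a' : bandit_ghat th a x a' = x * ((a == a')%:R - pi a').
Proof.
have pi_neq0 b : pi b != 0 by rewrite gt_eqF ?softmax_gt0.
rewrite /bandit_ghat; have -> : inner pi (bandit_rhat th a x) = x.
  rewrite /inner /bandit_rhat -[RHS](sum_indicator_mul a (fun=> x)).
  by apply: eq_bigr => b _; field.
by rewrite /bandit_rhat; field.
Qed.

Lemma sqnorm2_bandit_ghat a x :
  sqnorm2 (bandit_ghat th a x) = x ^+ 2 * sqnorm2 (fun a' => (a == a')%:R - pi a').
Proof.
by rewrite /sqnorm2 mulr_sumr; apply: eq_bigr => a' _; rewrite bandit_ghatE exprMn.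
Qed.

Lemma sum_abs_bandit_grad (r : Arm -> R) :
  \sum_a `|bandit_grad r th a| = mean_abs_dev pi r.
Proof. by apply: eq_bigr => a _; rewrite normrM gtr0_norm ?softmax_gt0. Qed.

Lemma bandit_Delta_le (r : Arm -> R) a b : a != b -> bandit_Delta r <= `|r a - r b|.
Proof. exact: (@fmin_le _ _ _ _ (a, b)). Qed.

Lemma bandit_Delta_le1 (r : Arm -> R) : (forall a, 0 <= r a <= 1) -> bandit_Delta r <= 1.
Proof.
move=> r_unit; apply: fmin_le_ub => // -[a b] _ /=.
have /andP[? ?] := r_unit a; have /andP[? ?] := r_unit b.
by rewrite ler_norml; apply/andP; split; lra.
Qed.

Variable P : Arm -> probability R R.
Hypothesis P_unit : forall a, P a [set x : R | 0 <= x <= 1]%classic = 1%E.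

Lemma bandit_Esq_le :
  (bandit_Esq P th <= (\sum_a pi a * sqnorm2 (fun a' => (a == a')%:R - pi a'))%:E)%E.
Proof.
rewrite /bandit_Esq -sumEFin; apply: lee_sum => a _.
rewrite (EFinM (pi a) (sqnorm2 _)); apply: lee_wpmul2l; first by rewrite lee_fin ltW ?softmax_gt0.
under eq_integral do rewrite sqnorm2_bandit_ghat.
exact: integral_sqr_mul_le (P_unit a) _ (sqnorm2_ge0 _).
Qed.

Lemma bandit_Esq_le_norm2_grad : (0 < #|Arm|)%N ->
  0 < bandit_Delta (bandit_mean P) ->
  (bandit_Esq P th <=
   ((8 * (#|Arm|%:R * Num.sqrt #|Arm|%:R) / bandit_Delta (bandit_mean P) ^+ 2)
      * norm2 (bandit_grad (bandit_mean P) th))%:E)%E.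
Proof.
move=> Arm_gt0 D_gt0; set r := bandit_mean P; set D := bandit_Delta r.
set A : R := #|Arm|%:R; set g := bandit_grad r th.
have r_unit a : 0 <= r a <= 1 by exact: mean_unit_interval (P_unit a).
have pi_ge0 a : 0 <= pi a by exact/ltW/softmax_gt0.
have pi_sum1 := softmax_sum1 th Arm_gt0.
have D_le1 : D <= 1 := bandit_Delta_le1 r_unit.
have coef : 4 / D <= 8 * A / D ^+ 2.
  rewrite expr2 invfM mulrA; apply: ler_wpM2r; first by rewrite invr_ge0 ltW.
  have A_ge1 : 1 <= A by rewrite ler1n.
  rewrite ler_pdivlMr //; lra.
apply: le_trans bandit_Esq_le _; rewrite lee_fin expected_sqnorm2_indicatorB //.
apply: le_trans (one_sub_sqnorm2_le_mean_abs_dev pi_ge0 pi_sum1 (@bandit_Delta_le r) D_gt0) _.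
rewrite -sum_abs_bandit_grad -/g.
apply: le_trans (ler_wpM2l _ (sum_abs_le_sqrt_card_norm2 g)) _; first by rewrite divr_ge0 ?ltW.
rewrite (_ : 8 * _ / _ * _ = 8 * A / D ^+ 2 * (Num.sqrt A * norm2 g)); last by ring.
by apply: ler_wpM2r; rewrite ?mulr_ge0 ?sqrtr_ge0 ?norm2_ge0.
Qed.

End BanditGradient.

Section SoftmaxPolicyGradient.
Variables (R : realType) (S Act : finType).
Variables (P : S -> Act -> S -> R) (r : S -> Act -> R) (gamma : R) (rho : S -> R).
Hypotheses (P_ge0 : forall s a s', 0 <= P s a s') (P_sum1 : forall s a, \sum_s' P s a s' = 1).
Hypotheses (r_unit : forall s a, 0 <= r s a <= 1) (gamma_unit : 0 <= gamma < 1).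
Hypotheses (rho_ge0 : forall s, 0 <= rho s) (rho_sum1 : \sum_s rho s = 1).
Variable th : S -> Act -> R.
Hypothesis Act_gt0 : (0 < #|Act|)%N.

Local Notation pi := (pol th).
Local Notation Q := (Qfun P r gamma (pol th)).
Local Notation M := ((1 - gamma)^-1).
Local Notation D := (mdp_Delta P r gamma th).

Definition grad_scale s : R := M * dvisit P gamma pi rho s.

Let pi_ge0 s a : 0 <= pi s a. Proof. exact/ltW/softmax_gt0. Qed.
Let pi_sum1 s : \sum_a pi s a = 1. Proof. exact: softmax_sum1. Qed.

Let Q_bound s a : 0 <= Q s a <= M.
Proof. exact: Qfun_bound. Qed.

Lemma grad_scale_bound s : 0 <= grad_scale s <= M.
Proof.
have /andP[g0 g1] := gamma_unit.
have /andP[d0 d1] := dvisit_unit P_ge0 P_sum1 pi_ge0 pi_sum1 gamma_unit rho_ge0 rho_sum1 s.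
have M_ge0 : 0 <= M by rewrite invr_ge0 subr_ge0 ltW.
by rewrite /grad_scale mulr_ge0 //= ler_piMr.
Qed.

Lemma mdp_Delta_le s a b : a != b -> D <= `|Q s a - Q s b|.
Proof. exact: (@fmin_le _ _ _ _ (s, a, b)). Qed.

Lemma mdp_Delta_le_horizon : D <= M.
Proof.
have /andP[g0 g1] := gamma_unit.
apply: fmin_le_ub => [[[s a] b] _ /=|]; last by rewrite invf_ge1 ?subr_gt0 ?gerBl.
have /andP[? ?] := Q_bound s a; have /andP[? ?] := Q_bound s b.
by rewrite ler_norml; apply/andP; split; lra.
Qed.

Lemma mdp_ghatE (sg : {ffun S -> Act}) s a :
  mdp_ghat P r gamma rho th sg (s, a) = grad_scale s * Q s (sg s) * ((sg s == a)%:R - pi s a).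
Proof.
have /andP[_ g1] := gamma_unit.
have pi_neq0 b : pi s b != 0 by rewrite gt_eqF ?softmax_gt0.
rewrite /mdp_ghat /=; have -> : inner (pi s) (mdp_Qhat P r gamma th sg s) = Q s (sg s).
  rewrite /inner /mdp_Qhat -[RHS](sum_indicator_mul (sg s) (Q s)).
  by apply: eq_bigr => b _; field.
rewrite /mdp_Qhat /grad_scale.
by case: eqP => [<-|_]; rewrite ?mulr1n ?mulr0n; field; rewrite pi_neq0 gt_eqF ?subr_gt0.
Qed.

Lemma mdp_EsqE : mdp_Esq P r gamma rho th =
  \sum_s \sum_b pi s b *
    (grad_scale s ^+ 2 * Q s b ^+ 2 * sqnorm2 (fun a => (b == a)%:R - pi s a)).
Proof.
have sqnormE (sg : {ffun S -> Act}) : sqnorm2 (mdp_ghat P r gamma rho th sg) =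
    \sum_s grad_scale s ^+ 2 * Q s (sg s) ^+ 2 * sqnorm2 (fun a => (sg s == a)%:R - pi s a).
  rewrite /sqnorm2 -(pair_big xpredT xpredT (fun s a => mdp_ghat P r gamma rho th sg (s, a) ^+ 2)) /=.
  apply: eq_bigr => s _; rewrite mulr_sumr; apply: eq_bigr => a _.
  by rewrite mdp_ghatE !exprMn.
rewrite /mdp_Esq; under eq_bigr do rewrite sqnormE mulr_sumr.
rewrite exchange_big /=; apply: eq_bigr => s _.
exact: (sum_ffun_prod_coord _ (fun b => grad_scale s ^+ 2 * Q s b ^+ 2 * _) pi_sum1).
Qed.

Lemma sum_abs_mdp_grad : \sum_p `|mdp_grad P r gamma rho th p| =
  \sum_s grad_scale s * mean_abs_dev (pi s) (Q s).
Proof.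
rewrite -(pair_big xpredT xpredT (fun s a => `|mdp_grad P r gamma rho th (s, a)|)) /=.
apply: eq_bigr => s _; rewrite /mean_abs_dev mulr_sumr; apply: eq_bigr => a _.
have /andP[c0 _] := grad_scale_bound s.
rewrite [mdp_grad _ _ _ _ _ _](_ : _ = grad_scale s * pi s a * (Q s a - inner (pi s) (Q s))) //.
by rewrite normrM (ger0_norm (mulr_ge0 c0 (pi_ge0 s a))) mulrA.
Qed.

Lemma mdp_Esq_le_sum_abs_grad : 0 < D ->
  mdp_Esq P r gamma rho th <= M ^+ 3 * (4 / D) * \sum_p `|mdp_grad P r gamma rho th p|.
Proof.
move=> D_gt0; rewrite mdp_EsqE sum_abs_mdp_grad mulr_sumr; apply: ler_sum => s _.
rewrite (_ : _ * (_ * _) = grad_scale s * M ^+ 3 * (4 / D) * mean_abs_dev (pi s) (Q s)); last by ring.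
apply: (expected_weighted_sqnorm2_indicatorB_le (pi_ge0 s) (pi_sum1 s) (mdp_Delta_le s) D_gt0
  (w := fun b => grad_scale s ^+ 2 * Q s b ^+ 2)) => b.
(* Only one factor [grad_scale s] is bounded by [M], the other one is kept to
   match the l1 norm of the exact gradient. *)
have /andP[c0 cM] := grad_scale_bound s; have /andP[q0 qM] := Q_bound s b.
rewrite mulr_ge0 ?exprn_ge0 //=.
rewrite [leLHS](_ : _ = grad_scale s * (grad_scale s * (Q s b * Q s b))); last by ring.
rewrite [M ^+ 3](_ : _ = M * (M * M)); last by ring.
apply: ler_wpM2l => //; exact: ler_pM c0 (mulr_ge0 q0 q0) cM (ler_pM q0 q0 qM qM).
Qed.

Lemma mdp_Esq_le_norm2_grad : 0 < D ->
  mdp_Esq P r gamma rho th <=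
  (4 * (#|Act|%:R * Num.sqrt #|Act|%:R) * Num.sqrt #|S|%:R / ((1 - gamma) ^+ 4 * D ^+ 2))
    * norm2 (mdp_grad P r gamma rho th).
Proof.
move=> D_gt0; have /andP[g0 g1] := gamma_unit.
set A : R := #|Act|%:R; set g := mdp_grad P r gamma rho th.
have M_gt0 : 0 < M by rewrite invr_gt0 subr_gt0.
have coef : 1 <= A * M / D.
  rewrite ler_pdivlMr // mul1r; apply: le_trans mdp_Delta_le_horizon _.
  by apply: ler_peMl; [exact: ltW | rewrite /A ler1n].
apply: le_trans (mdp_Esq_le_sum_abs_grad D_gt0) _.
apply: le_trans (ler_wpM2l _ (sum_abs_le_sqrt_card_norm2 g)) _.
  by rewrite mulr_ge0 ?divr_ge0 ?exprn_ge0 ?ltW.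
rewrite card_prod natrM sqrtrM ?ler0n //.
rewrite [leRHS](_ : _ = M ^+ 3 * (4 / D) * (Num.sqrt #|S|%:R * Num.sqrt A * norm2 g) * (A * M / D)).
  rewrite ler_peMr //; apply: mulr_ge0; last by rewrite !mulr_ge0 ?sqrtr_ge0 ?norm2_ge0.
  by rewrite mulr_ge0 ?exprn_ge0 ?divr_ge0 ?ltW.
by field; rewrite !gt_eqF ?subr_gt0.
Qed.

End SoftmaxPolicyGradient.

Theorem theorem4 (R : realType) :
  (* bandit setting *)
  (forall (Arm : finType) (P : Arm -> probability R R),
     (forall a : Arm, P a [set x : R | 0 <= x <= 1]%classic = 1%E) ->
     0 < bandit_Delta (bandit_mean P) ->
     forall th : Arm -> R,
       (bandit_Esq P th <=
        ((8 * (#|Arm|%:R * Num.sqrt #|Arm|%:R) / bandit_Delta (bandit_mean P) ^+ 2)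
          * norm2 (bandit_grad (bandit_mean P) th))%:E)%E)
  /\
  (* tabular MDP setting *)
  (forall (S Act : finType) (P : S -> Act -> S -> R) (r : S -> Act -> R)
          (gamma : R) (rho : S -> R),
     (forall s a s', 0 <= P s a s') ->
     (forall s a, \sum_(s' : S) P s a s' = 1) ->
     (forall s a, 0 <= r s a <= 1) ->
     0 <= gamma < 1 ->
     (forall s, 0 <= rho s) -> \sum_(s : S) rho s = 1 ->
     forall th : S -> Act -> R,
       0 < mdp_Delta P r gamma th ->
       mdp_Esq P r gamma rho th <=
       (4 * (#|Act|%:R * Num.sqrt #|Act|%:R) * Num.sqrt #|S|%:R
          / ((1 - gamma) ^+ 4 * mdp_Delta P r gamma th ^+ 2))
         * norm2 (mdp_grad P r gamma rho th)).
Proof.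
split=> [Arm P P_unit D_gt0 th | S Act P r gamma rho P_ge0 P_sum1 r_unit gamma_unit
           rho_ge0 rho_sum1 th D_gt0].
  have [Arm0|Arm_gt0] := posnP #|Arm|; last exact: bandit_Esq_le_norm2_grad.
  rewrite /bandit_Esq big1 => [|a _]; last by have := card0_eq Arm0 a.
  by rewrite Arm0 !(mul0r, mulr0).
have [Act0|Act_gt0] := posnP #|Act|; last exact: mdp_Esq_le_norm2_grad.
rewrite /mdp_Esq big1 => [|sg _]; first by rewrite Act0 !(mul0r, mulr0).
rewrite /sqnorm2 [X in _ * X]big1 ?mulr0 // => -[s a] _; by have := card0_eq Act0 a.
Qed.
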